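(* Let $G$ be a perfect finite group and $\Phi:G\to\mathrm{GL}_N(\mathbb C)$ a faithful representation such that (a) $\Phi=\bigoplus_{i=1}^n\Phi_i$ with each $\Phi_i$ irreducible, and (b) each $L_i:=\Phi_i(G)$ is quasisimple with simple quotient $S_i=L_i/\mathbf Z(L_i)$. Then there is a subset $\{j_1,\dots,j_m\}\subseteq\{1,\dots,n\}$ such that $G$ is isomorphic to a central product $R_{j_1}*\cdots*R_{j_m}$ where each $R_{j_i}$ is a quasisimple cover of $S_{j_i}$. If moreover (c) $\mathrm{Tr}(\Phi(g))\ne0$ for all $g\in G$, and (d) for every quasisimple subgroup $H\le G$ and every proper subset $\mathcal X\subsetneq\{\Phi_1,\dots,\Phi_n\}$ such that $\Phi_i(H)=\Phi_i(G)$ for all $\Phi_i\in\mathcal X$, there is $h\in H$ with $\mathrm{Tr}(\Phi_i(h))=0$ for all $\Phi_i\in\mathcal X$, then $G$ is quasisimple. *)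

From HB Require Import structures.
From mathcomp Require Import all_boot all_order all_algebra all_fingroup all_solvable all_field all_character.
Set Implicit Arguments. Unset Strict Implicit. Unset Printing Implicit Defensive.
Local Open Scope group_scope.

Definition perfect (gT : finGroupType) (G : {set gT}) : bool := [~: G, G] == G.

(* Quasisimple: perfect, and G / Z(G) is (nonabelian) simple.
   (MathComp's [simple] includes non-triviality.) *)
Definition quasisimple (gT : finGroupType) (G : {set gT}) : bool :=
  perfect G && simple (G / 'Z(G)).

From HB Require Import structures.
From mathcomp Require Import all_boot all_order all_algebra all_fingroup all_solvable all_field all_character.
Set Implicit Arguments. Unset Strict Implicit. Unset Printing Implicit Defensive.
Import GRing.Theory.

(* Write K_i for the kernel of the irreducible constituent
   Phi_i; the K_i are normal in G, meet trivially (Phi is faithful) and each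
   G / K_i is quasisimple.  Let Z_i be the preimage of Z(G / K_i).  Since a
   normal subgroup of a quasisimple group is either everything or central,
   one shows that the indices with equal Z_i form the classes of an
   equivalence, and that for a representative j of each class the subgroup
     R_j = G :&: \bigcap_(i | Z_i != Z_j) K_i
   is quasisimple, maps onto G / K_i for every i in the class of j, and has
   R_j / Z(R_j) isomorphic to (G / K_j) / Z(G / K_j).  The R_j commute
   pairwise and generate G, so G is their central product: this is the first
   claim.  For the second, if there were at least two classes, hypothesis (d)
   applied to H = R_j and the class X of j gives h_j in R_j on which every
   Phi_i, i in X, has trace 0; the product of the h_j then has trace 0 under
   Phi = sum Phi_i, contradicting (c).  Hence there is a single class and
   G = R_j is quasisimple. *)

Section Quasisimple.
Local Open Scope group_scope.
Variable gT : finGroupType.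
Implicit Types (L A B W H : {group gT}).

(* If a perfect group L is covered modulo a normal W both by A and by B, and
   [A, B] lies in W, then L / W is abelian and perfect, hence L lies in W. *)
Lemma perfect_commg_sub L A B W :
  [~: L, L] = L -> W <| L -> A \subset L -> B \subset L ->
  L \subset A * W -> L \subset B * W -> [~: A, B] \subset W -> L \subset W.
Proof.
move=> pL nWL sAL sBL sLA sLB sABW.
have nW := normal_norm nWL.
have nAW := subset_trans sAL nW; have nBW := subset_trans sBL nW.
rewrite -quotient_sub1 //.
have LA : L / W \subset A / W by rewrite -(quotientMidr W A) quotientS.
have LB : L / W \subset B / W by rewrite -(quotientMidr W B) quotientS.
rewrite -{1}pL quotientR // (subset_trans (commgSS LA LB)) //.
by rewrite -quotientR // -(trivg_quotient W) quotientS.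
Qed.

Lemma quasisimple_normal L H :
  quasisimple L -> H <| L -> H :=: L \/ H \subset 'Z(L).
Proof.
case/andP=> /eqP pL /simpleP[_ simL] nHL.
have nZL := normal_norm (center_normal L).
have nHZ := subset_trans (normal_sub nHL) nZL.
have [H1|HL] := simL (H / 'Z(L))%G (quotient_normal _ nHL).
  by right; rewrite -quotient_sub1 //; move: H1 => /= ->.
left; apply/eqP; rewrite eqEsubset normal_sub //=.
apply: (perfect_commg_sub (A := 'Z(L)) (B := L)) => //.
- exact: center_sub.
- by rewrite -quotientK //; move: HL => /= ->; rewrite quotientGK ?center_normal.
- exact: mulG_subl.
- by rewrite (commG1P (subsetIr _ _ : 'Z(L) \subset 'C(L))) sub1G.
Qed.

End Quasisimple.

Lemma other_member (T : finType) (A : {set T}) x :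
  x \in A -> #|A| != 1%N -> exists2 y, y \in A & y != x.
Proof.
move=> Ax nA1; have [sAx|/subsetPn[y Ay]] := boolP (A \subset [set x]).
  have eA : A = [set x] by apply/eqP; rewrite eqEsubset sAx sub1set Ax.
  by rewrite eA cards1 eqxx in nA1.
by rewrite inE => nyx; exists y.
Qed.

Section Decomposition.
Local Open Scope group_scope.
Variables (gT : finGroupType) (G : {group gT}) (n : nat) (K : 'I_n -> {group gT}).
Hypothesis perfG : perfect G.
Hypothesis nKG : forall i, K i <| G.
Hypothesis faithK : forall x, x \in G -> (forall i, x \in K i) -> x = 1.
Hypothesis qsK : forall i, quasisimple (G / K i).

Let DG : [~: G, G] = G := eqP perfG.
Let nKG' i : G \subset 'N(K i) := normal_norm (nKG i).
Let sKG i : K i \subset G := normal_sub (nKG i).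

Definition zpre i : {group gT} := (coset (K i) @*^-1 'Z(G / K i))%G.

Lemma ker_sub_zpre i : K i \subset zpre i.
Proof. by rewrite -sub_quotient_pre ?normG // trivg_quotient sub1G. Qed.

Lemma zpre_sub i : zpre i \subset G.
Proof. by rewrite -{1}(quotientGK (nKG i)) morphpreS // center_sub. Qed.

Lemma zpre_normal i : zpre i <| G.
Proof.
rewrite -{1}(quotientGK (nKG i)) morphpre_normal ?center_normal //.
  exact: subset_trans (center_sub _) (quotientS _ (nKG' i)).
exact: quotientS _ (nKG' i).
Qed.

Lemma commg_zpre i : [~: zpre i, G] \subset K i.
Proof.
rewrite -quotient_cents2 ?(subset_trans (zpre_sub i)) ?nKG' // cosetpreK.
exact: subsetIr.
Qed.

Lemma normal_cover_or_central i (M : {group gT}) :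
  M <| G -> G \subset M * K i \/ M \subset zpre i.
Proof.
move=> nMG; have nMK := subset_trans (normal_sub nMG) (nKG' i).
have [e|s] := quasisimple_normal (qsK i) (quotient_normal (K i) nMG).
  left; rewrite -{1}(quotientGK (nKG i)); move: e => /= <-.
  by rewrite quotientK // (normC nMK).
by right; rewrite -sub_quotient_pre.
Qed.

(* Z_i is a proper subgroup of G, since G / K_i is not abelian. *)
Lemma zpre_proper i : ~~ (G \subset zpre i).
Proof.
apply/negP => sGZ.
have sGK : G \subset K i.
  have sGZK := subset_trans sGZ (mulG_subl (K i) (zpre i)).
  apply: (perfect_commg_sub (A := zpre i) (B := zpre i)) => //; try exact: zpre_sub.
  exact: subset_trans (commgS _ (zpre_sub i)) (commg_zpre i).
case/andP: (qsK i) => _ /simpleP[nt _].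
have s1 : G / K i \subset 'Z(G / K i) by rewrite (quotientS1 sGK) sub1G.
by move: nt; rewrite /= (quotientS1 s1) eqxx.
Qed.

(* If Z_i != Z_i' and the normal subgroup A covers G / K_i, then so does
   A :&: K_i'; otherwise comparing Z_i, Z_i' and K_i' contradicts Z_i < G. *)
Lemma cover_meet i i' (A : {group gT}) : zpre i != zpre i' -> A <| G ->
  G \subset A * K i -> G \subset (A :&: K i') * K i.
Proof.
move=> neq nAG sGA.
have [//|sAKZ] := normal_cover_or_central i (normalI nAG (nKG i')).
exfalso; have sAG := normal_sub nAG.
have [sGKK | sKZ'] := normal_cover_or_central i (nKG i').
  apply: (negP (zpre_proper i)).
  apply: (perfect_commg_sub (A := A) (B := K i')) => //.
  - exact: zpre_normal.
  - exact: subset_trans sGA (mulgS _ (ker_sub_zpre i)).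
  - exact: subset_trans sGKK (mulgS _ (ker_sub_zpre i)).
  - apply: subset_trans sAKZ; apply: commg_subI; rewrite subsetI subxx.
      exact: subset_trans sAG (nKG' i').
    exact: subset_trans (sKG i') (normal_norm nAG).
have [sGZK | sZZ'] := normal_cover_or_central i' (zpre_normal i).
  by apply: (negP (zpre_proper i)); rewrite mulGSid in sGZK.
have [sGZK | sZ'Z] := normal_cover_or_central i (zpre_normal i').
  apply: (negP (zpre_proper i')).
  by rewrite mulGSid in sGZK => //; exact: subset_trans (ker_sub_zpre i) sZZ'.
have e : gval (zpre i) = zpre i' by apply/eqP; rewrite eqEsubset sZZ'.
by rewrite (group_inj e) eqxx in neq.
Qed.

Definition Rfac j : {group gT} := (G :&: \bigcap_(i | zpre i != zpre j) K i)%G.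
Definition Bfac j : {group gT} := (G :&: \bigcap_(i | zpre i == zpre j) K i)%G.

Lemma meet_kernels_normal (P : pred 'I_n) : G :&: \bigcap_(i | P i) K i <| G.
Proof.
rewrite /normal subsetIl normsI ?normG // norms_bigcap //.
by apply/bigcapsP=> i _; exact: nKG'.
Qed.

Lemma Rfac_normal j : Rfac j <| G. Proof. exact: meet_kernels_normal. Qed.
Lemma Bfac_normal j : Bfac j <| G. Proof. exact: meet_kernels_normal. Qed.
Lemma Rfac_sub j : Rfac j \subset G. Proof. exact: subsetIl. Qed.

Lemma Rfac_sub_ker j i : zpre i != zpre j -> Rfac j \subset K i.
Proof. by move=> h; apply: subset_trans (subsetIr _ _) _; apply: bigcap_inf. Qed.

Lemma Bfac_sub_ker j i : zpre i = zpre j -> Bfac j \subset K i.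
Proof.
by move=> h; apply: subset_trans (subsetIr _ _) _; apply: bigcap_inf; rewrite h.
Qed.

(* Both R_j :&: B_j and R_j :&: R_k (for different classes) lie in every
   kernel, hence are trivial. *)
Lemma Rfac_Bfac_trivial j x : x \in Rfac j -> x \in Bfac j -> x = 1.
Proof.
move=> Rx Bx; apply: faithK; first exact: (subsetP (Rfac_sub j)).
move=> i; case: (eqVneq (zpre i) (zpre j)) => h.
  exact: (subsetP (Bfac_sub_ker h)).
exact: (subsetP (Rfac_sub_ker h)).
Qed.

Lemma Rfac_Rfac_trivial j k x :
  zpre j != zpre k -> x \in Rfac j -> x \in Rfac k -> x = 1.
Proof.
move=> neq Rjx Rkx; apply: faithK; first exact: (subsetP (Rfac_sub j)).
move=> i; case: (eqVneq (zpre i) (zpre j)) => h.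
  by apply: (subsetP (Rfac_sub_ker (j := k) _)) => //; rewrite h.
exact: (subsetP (Rfac_sub_ker h)).
Qed.

Lemma meet_kernels_cover i (P : pred 'I_n) :
  (forall i', P i' -> zpre i' != zpre i) ->
  G \subset (G :&: \bigcap_(i' | P i') K i') * K i.
Proof.
move=> hP.
pose Inv (X : {set gT}) := exists2 H : {group gT}, X = H &
   (G \subset 'N(H)) /\ G \subset (G :&: H) * K i.
suff [H -> [_ //]] : Inv (\bigcap_(i' | P i') K i').
apply: (big_rec Inv).
  exists [set: gT]%G => //; split; first by rewrite normT subsetT.
  by rewrite setIT mulG_subl.
move=> i' X Pi' [H -> [nH sH]].
exists (K i' :&: H)%G => //; split; first by rewrite normsI.
rewrite setICA setIC.
have nGH : (G :&: H)%G <| G by rewrite /normal subsetIl normsI ?normG.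
by apply: (cover_meet (A := (G :&: H)%G)) => //; rewrite eq_sym hP.
Qed.

Lemma Rfac_cover j i : zpre i = zpre j -> G \subset Rfac j * K i.
Proof. by move=> h; apply: meet_kernels_cover => i'; rewrite h. Qed.

(* A normal subgroup M covering G / K_j covers G modulo B_j: G = Z_j (M B_j)
   and [Z_j, Z_j] lies in each K_i of the class of j, hence in B_j, so
   perfectness of G forces G = M B_j. *)
Lemma cover_mod_Bfac j (M : {group gT}) : M <| G -> G \subset M * K j ->
  G \subset M * Bfac j.
Proof.
move=> nMG sGM.
have nBM := subset_trans (normal_sub (Bfac_normal j)) (normal_norm nMG).
rewrite -norm_joinEr //.
have nWG : (M <*> Bfac j)%G <| G by apply: normalY => //; exact: Bfac_normal.
have sGZW : G \subset zpre j * (M <*> Bfac j).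
  rewrite -(normC (subset_trans (normal_sub nWG) (normal_norm (zpre_normal j)))).
  apply: subset_trans sGM _; apply: mulgSS; first exact: joing_subl.
  exact: ker_sub_zpre.
apply: (perfect_commg_sub (A := zpre j) (B := zpre j)) => //; try exact: zpre_sub.
apply: subset_trans (joing_subr _ _); rewrite subsetI; apply/andP; split.
  by rewrite -{1}DG commgSS ?zpre_sub.
apply/bigcapsP => i /eqP h; rewrite -h.
exact: subset_trans (commgS _ (zpre_sub i)) (commg_zpre i).
Qed.

(* The chosen representatives: the least index of each class. *)
Definition reps := [set j : 'I_n | [forall i : 'I_n, (i < j)%N ==> (zpre i != zpre j)]].

Lemma reps_inj j k : j \in reps -> k \in reps -> zpre j = zpre k -> j = k.
Proof.
rewrite !inE => /forallP Jj /forallP Jk e.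
case: (ltngtP j k) => [lt|lt|/val_inj //].
  by have := Jk j; rewrite lt e eqxx.
by have := Jj k; rewrite lt e eqxx.
Qed.

Lemma reps_cover i : exists2 j, j \in reps & zpre j = zpre i.
Proof.
have [j /eqP Zj minj] :=
  arg_minnP (fun j : 'I_n => val j) (P := fun j => zpre j == zpre i) (eqxx _).
exists j => //; rewrite inE; apply/forallP => i'; apply/implyP => lt.
apply/negP => /eqP e.
by have := minj i'; rewrite e Zj eqxx leqNgt lt => /(_ isT).
Qed.

Lemma coset_family_inj x y : x \in G -> y \in G ->
  (forall i, coset (K i) x = coset (K i) y) -> x = y.
Proof.
move=> Gx Gy e; apply/eqP; rewrite eq_mulgV1; apply/eqP/faithK.
  by rewrite groupM ?groupV.
move=> i; have Nx := subsetP (nKG' i) x Gx.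
have Ny : y^-1 \in 'N(K i) by rewrite groupV; exact: (subsetP (nKG' i) y Gy).
apply: coset_idr; first by rewrite groupM.
rewrite morphM // morphV -?(groupV _ y) //.
by apply/eqP; rewrite -eq_mulgV1; apply/eqP; exact: e i.
Qed.

Lemma coset_prod_reps (r : 'I_n -> gT) i j0 :
  (forall j, j \in reps -> r j \in Rfac j) -> j0 \in reps -> zpre j0 = zpre i ->
  coset (K i) (\prod_(j in reps) r j) = coset (K i) (r j0).
Proof.
move=> rR Jj0 ej0.
rewrite morph_prod; last first.
  by move=> j Jj; apply: (subsetP (nKG' i)); apply: (subsetP (Rfac_sub j)); exact: rR.
rewrite big_mkcond -(@big_rmcond _ _ _ _ _ (pred1 j0)); last first.
  move=> j /= nj; case: ifP => // Jj; apply: coset_id.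
  apply: (subsetP (Rfac_sub_ker (j := j) _)); last exact: rR.
  rewrite -ej0; apply/eqP => e; move/negP: nj; apply; apply/eqP.
  exact: reps_inj.
by rewrite big_pred1_eq Jj0.
Qed.

Lemma Rfac_gen : G \subset << \bigcup_(j in reps) Rfac j >>.
Proof.
apply/subsetP => x Gx.
have ex j : exists y : gT, y \in Rfac j /\ y^-1 * x \in Bfac j.
  have := subsetP (cover_mod_Bfac (Rfac_normal j) (Rfac_cover (erefl (zpre j)))) x Gx.
  by case/mulsgP => y b Ry Bb ->; exists y; rewrite mulKg.
have [r hr] := fin_all_exists ex.
suff -> : x = \prod_(j in reps) r j.
  apply: group_prod => j Jj; apply: mem_gen; apply/bigcupP; exists j => //.
  by case: (hr j).
apply: coset_family_inj => //.
  by apply: group_prod => j _; apply: (subsetP (Rfac_sub j)); case: (hr j).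
move=> i; have [j0 Jj0 ej0] := reps_cover i.
rewrite (coset_prod_reps _ Jj0 ej0); last by move=> j _; case: (hr j).
case: (hr j0) => Rr Bb.
have Gr : r j0 \in G := subsetP (Rfac_sub j0) _ Rr.
rewrite -{1}(mulKVg (r j0) x) morphM; last 2 first.
- exact: (subsetP (nKG' i)).
- by apply: (subsetP (nKG' i)); exact: (subsetP (normal_sub (Bfac_normal j0))).
by rewrite [X in _ * X]coset_id ?mulg1 // (subsetP (Bfac_sub_ker (esym ej0))).
Qed.

Lemma cprod_Rfac : \big[cprod/1]_(j in reps) Rfac j = G.
Proof.
have /eqP -> : \big[cprod/1]_(j in reps) Rfac j == (\prod_(j in reps) Rfac j)%G.
  apply/bigcprodYP => i j Ji Jj nij; apply/commG1P/trivgP/subsetP => x.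
  have sub : [~: Rfac i, Rfac j] \subset Rfac i :&: Rfac j.
    apply: commg_subI; rewrite subsetI subxx /=.
      exact: subset_trans (Rfac_sub i) (normal_norm (Rfac_normal j)).
    exact: subset_trans (Rfac_sub j) (normal_norm (Rfac_normal i)).
  move/(subsetP sub)/setIP => [xi xj]; rewrite inE; apply/eqP.
  apply: (Rfac_Rfac_trivial (j := i) (k := j)) => //.
  by apply: contra nij => /eqP e; apply/eqP; apply: reps_inj.
rewrite /= bigprodGE; apply/eqP; rewrite eqEsubset Rfac_gen andbT gen_subG.
by apply/bigcupsP => j _; exact: Rfac_sub.
Qed.

Lemma Rfac_quotient j : Rfac j / K j = G / K j.
Proof.
apply/eqP; rewrite eqEsubset quotientS ?Rfac_sub //=.
by rewrite -(quotientMidr (K j) (Rfac j)) quotientS // Rfac_cover.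
Qed.

(* R_j is perfect: its derived group D covers G / K_j (as G is perfect),
   hence covers G modulo B_j, and R_j :&: B_j = 1 gives D = R_j. *)
Lemma Rfac_perfect j : [~: Rfac j, Rfac j] = Rfac j.
Proof.
set D := [~: Rfac j, Rfac j].
have sDR : D \subset Rfac j by rewrite commg_subl normG.
have nRK := subset_trans (Rfac_sub j) (nKG' j).
have nDG : [~: Rfac j, Rfac j]%G <| G.
  by rewrite /normal (subset_trans sDR (Rfac_sub j)) normsR ?normal_norm ?Rfac_normal.
have sGD : G \subset D * K j.
  rewrite (normC (subset_trans sDR nRK)) -quotientK ?(subset_trans sDR nRK) //.
  rewrite -sub_quotient_pre ?nKG' // quotientR // Rfac_quotient.
  by rewrite -quotientR ?nKG' // DG.
have sGDB := cover_mod_Bfac nDG sGD.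
apply/eqP; rewrite eqEsubset sDR /=; apply/subsetP => x Rx.
have /mulsgP[d b Dd Bb xe] := subsetP sGDB x (subsetP (Rfac_sub j) x Rx).
rewrite xe; suff -> : b = 1 by rewrite mulg1.
apply: (Rfac_Bfac_trivial (j := j)) => //.
by rewrite -(groupMl _ (subsetP sDR _ Dd)) -xe.
Qed.

(* The centre of R_j is its intersection with Z_j: Z_j centralises R_j
   modulo every kernel, and Z(R_j) maps into Z(G / K_j) = Z(R_j K_j / K_j). *)
Lemma center_Rfac j : 'Z(Rfac j) = zpre j :&: Rfac j.
Proof.
have nRK := subset_trans (Rfac_sub j) (nKG' j).
have nZK := subset_trans (center_sub (Rfac j)) nRK.
apply/eqP; rewrite eqEsubset; apply/andP; split.
  rewrite subsetI center_sub andbT -sub_quotient_pre // subsetI.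
  rewrite quotientS ?(subset_trans (center_sub _) (Rfac_sub j)) //=.
  rewrite -Rfac_quotient quotient_cents2 //.
  by rewrite (commG1P (subsetIr _ _ : 'Z(Rfac j) \subset 'C(Rfac j))) sub1G.
apply/subsetP => x /setIP[Zx Rx]; apply/centerP; split => // y Ry.
have Gx := subsetP (Rfac_sub j) x Rx; have Gy := subsetP (Rfac_sub j) y Ry.
apply/commgP/eqP; apply: faithK; first by rewrite groupR.
move=> i; case: (eqVneq (zpre i) (zpre j)) => h.
  by apply: (subsetP (commg_zpre i)); apply: mem_commg => //; rewrite h.
have Kx := subsetP (Rfac_sub_ker h) x Rx.
by rewrite /commg groupM ?groupV // memJ_norm // (subsetP (nKG' i)).
Qed.

(* R_j / Z(R_j) = R_j Z_j / Z_j = G / Z_j, which is (G / K_j) / Z(G / K_j)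
   by the third isomorphism theorem. *)
Lemma Rfac_central_quotient j :
  Rfac j / 'Z(Rfac j) \isog (G / K j) / 'Z(G / K j).
Proof.
rewrite center_Rfac.
have nRZ := subset_trans (Rfac_sub j) (normal_norm (zpre_normal j)).
apply: isog_trans (second_isog nRZ) _.
change (Rfac j / zpre j \isog (G / K j) / 'Z(G / K j)).
have -> : Rfac j / zpre j = G / zpre j.
  apply/eqP; rewrite eqEsubset quotientS ?Rfac_sub //=.
  rewrite -(quotientMidr (zpre j) (Rfac j)) quotientS //.
  exact: subset_trans (Rfac_cover (erefl (zpre j))) (mulgS _ (ker_sub_zpre j)).
rewrite isog_sym.
have := third_isog (ker_sub_zpre j) (nKG j) (zpre_normal j).
by rewrite /zpre /= cosetpreK.
Qed.

Lemma Rfac_quasisimple j : quasisimple (Rfac j).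
Proof.
rewrite /quasisimple /perfect Rfac_perfect eqxx /=.
by rewrite (isog_simple (Rfac_central_quotient j)); case/andP: (qsK j).
Qed.

Lemma quasisimple_single_class j : reps = [set j] -> quasisimple G.
Proof.
by move=> eJ; rewrite -cprod_Rfac eJ big_set1; exact: Rfac_quasisimple.
Qed.

End Decomposition.

(* The constituents Phi_i of a representation Phi, given by a family of
   submodules U_i, and their kernels K_i. *)
Section Constituents.
Local Open Scope group_scope.
Local Open Scope ring_scope.
Variables (gT : finGroupType) (G : {group gT}) (N n : nat).
Variable Phi : mx_representation algC G N.
Variables (U : 'I_n -> 'M[algC]_N) (modU : forall i, mxmodule Phi (U i)).
Hypothesis sumU1 : (\sum_(i < n) U i == 1%:M)%MS.

Definition ker_constituent i : {group gT} := [group of rker (submod_repr (modU i))].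

Lemma ker_constituent_normal i : ker_constituent i <| G.
Proof. exact: rker_normal. Qed.

(* Since the U_i span, an element acting trivially on every U_i is in the
   kernel of Phi; so for faithful Phi the kernels K_i meet trivially. *)
Lemma ker_constituents_faithful : mx_faithful Phi ->
  forall x, x \in G -> (forall i, x \in ker_constituent i) -> x = 1%g.
Proof.
move=> faith x Gx Kx.
suff : x \in rker Phi by move/(subsetP faith); rewrite inE => /eqP.
apply/rkerP; split => //.
case/andP: sumU1 => _ /sub_sumsmxP[u eu].
have fixU i : U i *m Phi x = U i.
  by have := Kx i; rewrite /= rker_submod inE => /andP[_ /eqP].
rewrite -[Phi x]mul1mx {1}eu mulmx_suml.
by under eq_bigr => i _ do rewrite -mulmxA fixU.
Qed.

Lemma mxtrace_constituents : mxdirect (\sum_(i < n) U i) ->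
  forall g, g \in G -> \tr (Phi g) = \sum_(i < n) \tr (submod_repr (modU i) g).
Proof.
move=> dxU g Gg; have modPhi := mxmodule1 Phi.
rewrite -(mxtrace_submod1 modPhi (eqmx_refl _) Gg).
by rewrite (mxtrace_dsum_mod modU modPhi (eqmxP sumU1) dxU Gg).
Qed.

Lemma constituent_coset i x y : x \in G -> y \in G ->
  coset (ker_constituent i) x = coset (ker_constituent i) y ->
  submod_repr (modU i) x = submod_repr (modU i) y.
Proof.
move=> Gx Gy /rcoset_kercosetP.
have nK := normal_norm (ker_constituent_normal i).
case/(_ (subsetP nK _ Gx) (subsetP nK _ Gy))/rcosetP => k /rkerP[Gk fixk] ->.
by rewrite repr_mxM // fixk mul1mx.
Qed.

(* Similar constituents have equal kernels, hence lie in the same class. *)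
Lemma rsim_same_class i k :
  mx_rsim (submod_repr (modU i)) (submod_repr (modU k)) ->
  zpre G ker_constituent i = zpre G ker_constituent k.
Proof.
move/rker_mx_rsim => e.
by rewrite /zpre (group_inj (e : gval (ker_constituent i) = ker_constituent k)).
Qed.

Hypothesis perfG : perfect G.
Hypothesis faithPhi : mx_faithful Phi.
Hypothesis qsU : forall i, quasisimple (G / ker_constituent i)%g.
Hypothesis vanishing : forall H : {group gT}, H \subset G -> quasisimple H ->
  forall X : {set 'I_n},
    (exists i0 : 'I_n, forall j, j \in X ->
        ~ mx_rsim (submod_repr (modU j)) (submod_repr (modU i0))) ->
    (forall i, i \in X -> forall g, g \in G ->
        exists2 h, h \in H & submod_repr (modU i) h = submod_repr (modU i) g) ->
    exists2 h, h \in H & forall i, i \in X -> \tr (submod_repr (modU i) h) = 0.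

Local Notation K := ker_constituent.
Let nKG := ker_constituent_normal.
Let faithK := ker_constituents_faithful faithPhi.

(* If some other class exists, (d) applied to H = R_j and the class X of j
   yields h in R_j on which all Phi_i, i in X, have trace zero: R_j maps onto
   each G / K_i, i in X, and no i in X is similar to the other class. *)
Lemma class_vanishing j k : j \in reps G K -> k \in reps G K -> k != j ->
  exists2 h, h \in Rfac G K j &
    forall i, zpre G K i = zpre G K j -> \tr (submod_repr (modU i) h) = 0.
Proof.
move=> Jj Jk nkj; set X := [set i | zpre G K i == zpre G K j].
have notsim : exists i0 : 'I_n, forall i, i \in X ->
    ~ mx_rsim (submod_repr (modU i)) (submod_repr (modU i0)).
  exists k => i; rewrite inE => /eqP eij /rsim_same_class eik.
  by move/eqP: nkj; apply; apply: (reps_inj Jk Jj); rewrite -eik eij.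
have onto : forall i, i \in X -> forall g, g \in G ->
    exists2 h, h \in Rfac G K j & submod_repr (modU i) h = submod_repr (modU i) g.
  move=> i; rewrite inE => /eqP eij g Gg.
  have /mulsgP[r x Rr /rkerP[Gx fixx] ->] :=
    subsetP (Rfac_cover perfG nKG qsU eij) g Gg.
  by exists r; rewrite // repr_mxM ?fixx ?mulmx1 // (subsetP (Rfac_sub G K j)).
have [h Rh tr0] := vanishing (Rfac_sub G K j)
  (Rfac_quasisimple perfG nKG faithK qsU j) notsim onto.
by exists h => // i eij; apply: tr0; rewrite inE eij.
Qed.

(* With at least two classes, the product of the elements h_j above has
   trace zero under Phi: modulo K_i it equals the h_j of the class of i. *)
Lemma trace_vanishing : mxdirect (\sum_(i < n) U i) ->
  (forall j, j \in reps G K -> exists2 k, k \in reps G K & k != j) ->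
  exists2 g, g \in G & \tr (Phi g) = 0.
Proof.
move=> dxU other.
have ex j : exists h : gT, j \in reps G K -> h \in Rfac G K j /\
    forall i, zpre G K i = zpre G K j -> \tr (submod_repr (modU i) h) = 0.
  case Jj: (j \in reps G K); last by exists 1%g.
  have [k Jk nkj] := other j Jj.
  by have [h Rh tr0] := class_vanishing Jj Jk nkj; exists h.
have [h hh] := fin_all_exists ex.
have Rh j : j \in reps G K -> h j \in Rfac G K j by case/hh.
have Gh j : j \in reps G K -> h j \in G by move/Rh/(subsetP (Rfac_sub G K j)).
have Gg : (\prod_(j in reps G K) h j)%g \in G by exact: group_prod.
exists (\prod_(j in reps G K) h j)%g => //.
rewrite mxtrace_constituents //; apply: big1 => i _.
have [j Jj eji] := reps_cover G K i.
rewrite (constituent_coset Gg (Gh j Jj) (coset_prod_reps nKG Rh Jj eji)).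
by case: (hh j Jj) => _; apply.
Qed.

End Constituents.

Unset Implicit Arguments.
Set Strict Implicit.
Local Open Scope ring_scope.

Theorem mainTheorem6
  (gT : finGroupType) (G : {group gT}) (N n : nat)
  (Phi : mx_representation algC G N)
  (U : 'I_n -> 'M[algC]_N)
  (modU : forall i, mxmodule Phi (U i)) :
  perfect G ->
  mx_faithful Phi ->
  (* (a) Phi is the direct sum of the irreducible subrepresentations on U i *)
  mxdirect (\sum_(i < n) U i) ->
  (\sum_(i < n) U i == 1%:M)%MS ->
  (forall i, mxsimple Phi (U i)) ->
  (* (b) each image Phi_i(G) ~= G / ker Phi_i is quasisimple *)
  (forall i, quasisimple (G / rker (submod_repr (modU i)))%g) ->
  (exists (J : {set 'I_n}) (R : 'I_n -> {group gT}),
      \big[cprod/1%g]_(j in J) R j = G /\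
      forall j, j \in J ->
        quasisimple (R j) /\
        (R j / 'Z(R j))%g \isog
          ((G / rker (submod_repr (modU j))) / 'Z(G / rker (submod_repr (modU j))))%g)
  /\
  ((* (c) *)
   (forall g, g \in G -> \tr (Phi g) != 0) ->
   (* (d) *)
   (forall H : {group gT}, H \subset G -> quasisimple H ->
      forall X : {set 'I_n},
        (exists i0 : 'I_n, forall j, j \in X ->
            ~ mx_rsim (submod_repr (modU j)) (submod_repr (modU i0))) ->
        (forall i, i \in X -> forall g, g \in G ->
            exists2 h, h \in H & submod_repr (modU i) h = submod_repr (modU i) g) ->
        exists2 h, h \in H &
          forall i, i \in X -> \tr (submod_repr (modU i) h) = 0) ->
   quasisimple G).
Proof.
move=> perfG faith dxU sumU1 _ qsU.
set K := ker_constituent modU.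
have nKG := ker_constituent_normal modU.
have faithK := ker_constituents_faithful (modU := modU) sumU1 faith.
split.
  exists (reps G K), (Rfac G K); split; first exact: (cprod_Rfac perfG nKG faithK qsU).
  move=> j _; split; first exact: (Rfac_quasisimple perfG nKG faithK qsU).
  exact: (Rfac_central_quotient perfG nKG faithK qsU).
move=> traceNZ vanishing.
have [/cards1P[j eJ] | not1] := boolP (#|reps G K| == 1%N).
  exact: quasisimple_single_class perfG nKG faithK qsU j eJ.
have other j : j \in reps G K -> exists2 k, k \in reps G K & k != j.
  by move=> Jj; exact: other_member Jj not1.
have [g Gg tr0] := trace_vanishing sumU1 perfG faith qsU vanishing dxU other.
by have := traceNZ g Gg; rewrite tr0 eqxx.
Qed.
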